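(* For every integer $n\geq2$, \[\left(\zeta_{p^{n+1}}-1\right)^{-2p+2}=p^{-\frac{2}{p^n}}\left(1-(-1)^n\zeta_{2(p-1)}p^{\frac{1}{p^n(p-1)}}-\mathds{1}_3(p)\cdot 3^{\frac{2}{3^n\cdot 2}}\sigma_{n+1}+O\!\left(p^{\frac{2}{p^n(p-1)}}\right)\right),\] where $\mathds{1}_3(p)=1$ if $p=3$ and $0$ otherwise.
   Context: $p\geq 3$ is a prime. $\mathbb{L}_p=W(\bar{\mathbb{F}}_p)((p^{\mathbb{Q}}))$ is the $p$-adic Mal'cev–Neumann field: each element is uniquely $\sum_{x\in\mathbb{Q}}[\alpha_x]p^x$ with $\alpha_x\in\bar{\mathbb{F}}_p$, $[\cdot]$ the Teichmüller lift, and well-ordered support; it is an algebraically closed complete field with valuation $v_p(\alpha)=\min$ of the support ($v_p(p)=1$), and $\bar{\mathbb{Q}}_p$ is regarded as a subfield via a fixed continuous embedding. For $x\in\mathbb{Q}$, $p^x$ denotes $[1]p^x$ (and likewise $3^x$ when $p=3$). For $r\in\mathbb{Q}$, ''$\alpha=\beta+O(p^r)$'' means $v_p(\alpha-\beta)\geq r$; an expression $c\,(\cdots+O(p^r))$ means $c$ times an element of that form. $H_k=\sum_{i=1}^k1/i$. For $n\geq1$, $\sigma_n=\sum_{k=n}^{\infty}p^{-1/p^k}\in\mathbb{L}_p$. Fix a primitive $2(p-1)$-th root of unity $\zeta_{2(p-1)}\in W(\bar{\mathbb{F}}_p)$ and a system $(\zeta_{p^n})_{n\geq1}$ of primitive $p^n$-th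 roots of unity in $\mathbb{L}_p$ with $\zeta_{p^{n+1}}^p=\zeta_{p^n}$, normalized (as established in earlier work of the authors) so that for every $n\geq2$, writing $\zeta=\zeta_{2(p-1)}$, \[\zeta_{p^n}=\sum_{k=0}^{p-1}\frac{(-1)^{nk}}{k!}\zeta^k p^{\frac{k}{p^{n-1}(p-1)}}+\sum_{k=0}^{p-1}\frac{(-1)^{n(k+1)}}{k!}\zeta^{k+1}p^{\frac{k+p}{p^{n-1}(p-1)}}\sigma_n-\sum_{k=1}^{p-1}\frac{H_k}{k!}(-1)^{n(k+1)}\zeta^{k+1}p^{\frac{k+p}{p^{n-1}(p-1)}}+\frac12\zeta^2p^{\frac{2}{p^{n-2}(p-1)}}\sigma_n^2+\frac{(-1)^n}{2}\zeta^3p^{\frac{2}{p^{n-2}(p-1)}-\frac{p-2}{p^n(p-1)}}+O\!\left(p^{\frac{2}{p^{n-2}(p-1)}}\right).\] *)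

From HB Require Import structures.
From mathcomp Require Import all_boot all_order all_algebra.
Set Implicit Arguments. Unset Strict Implicit. Unset Printing Implicit Defensive.
Import Order.TTheory GRing.Theory Num.Theory.
Local Open Scope ring_scope.

Definition qfrac (a b : nat) : rat := a%:Q / b%:Q.

Section MN.
Variables (L : fieldType) (v : L -> rat).

(* "v_p(x) >= r" (with v_p(0) = +oo) *)
Definition vge (x : L) (r : rat) : Prop := x = 0 \/ r <= v x.

(* "a = b + O(p^r)" *)
Definition bigO_eq (a b : L) (r : rat) : Prop := vge (a - b) r.

Definition is_p_valuation (p : nat) : Prop :=
  [/\ forall x y : L, x != 0 -> y != 0 -> v (x * y) = v x + v y,
      forall (x y : L) (r : rat), vge x r -> vge y r -> vge (x + y) r,
      (p%:R : L) != 0 /\ v p%:R = 1 &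
      forall k : nat, (0 < k)%N -> ~~ (p %| k)%N -> (k%:R : L) != 0 /\ v k%:R = 0].

Variables (p : nat) (pp : rat -> L).

(* pp x = p^x := [1] p^x : a homomorphism Q -> L^x with p^1 = p, v(p^x) = x *)
Definition is_ppow : Prop :=
  [/\ forall x y : rat, pp (x + y) = pp x * pp y,
      pp 1 = p%:R &
      forall x : rat, pp x != 0 /\ v (pp x) = x].

(* sigma_n = sum_{k >= n} p^{-1/p^k}, n >= 1 *)
Definition is_sigma (sigma : nat -> L) : Prop :=
  forall n : nat, (1 <= n)%N ->
    sigma n = pp (- qfrac 1 (p ^ n)) + sigma n.+1 /\
    sigma n != 0 /\ v (sigma n) = - qfrac 1 (p ^ n).

Definition harm (k : nat) : L := \sum_(1 <= i < k.+1) (i%:R)^-1.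

Definition zeta_expansion (z : L) (sigma : nat -> L) (zn : L) (n : nat) : Prop :=
  let D := (p ^ n.-1 * (p - 1))%N in
  let E := qfrac 2 (p ^ (n - 2) * (p - 1)) in
  exists e : L, vge e E /\
  zn =
    \sum_(k < p) (-1) ^+ (n * k) * ((k`!)%:R)^-1 * z ^+ k * pp (qfrac k D)
  + \sum_(k < p) (-1) ^+ (n * k.+1) * ((k`!)%:R)^-1 * z ^+ k.+1
                   * pp (qfrac (k + p) D) * sigma n
  - \sum_(1 <= k < p) harm k * ((k`!)%:R)^-1 * (-1) ^+ (n * k.+1) * z ^+ k.+1
                   * pp (qfrac (k + p) D)
  + 2%:R^-1 * z ^+ 2 * pp E * sigma n ^+ 2
  + (-1) ^+ n * 2%:R^-1 * z ^+ 3 * pp (E - qfrac (p - 2) (p ^ n * (p - 1)))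
  + e.

End MN.

From HB Require Import structures.
From mathcomp Require Import all_boot all_order all_algebra.
From mathcomp Require Import ring lra zify.
Set Implicit Arguments. Unset Strict Implicit. Unset Printing Implicit Defensive.
Import Order.TTheory GRing.Theory Num.Theory.
Local Open Scope ring_scope.

(* Put d = 1/(p^n (p-1)), a = (-1)^(n+1) zeta_(2(p-1)) p^d and
   t = p^((p-1) d) sigma_(n+1); they have valuations d and (p-1)/p^(n+1) >= d.
   Since every coefficient 1/k!, H_k, 1/2 of the normalisation of
   zeta_(p^(n+1)) is a p-adic unit (k < p), truncating it modulo p^(3d) gives
   zeta_(p^(n+1)) - 1 = a (1 + X) with X = a/2 + t + O(p^(2d)).
   Now a^(2(p-1)) = p^(2/p^n), and to second order
   (1 + X)^(-2(p-1)) = 1 - (p-1) a - 2(p-1) t + O(p^(2d)), where p a is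
   O(p^(2d)) too.  Finally 2(p-1) t = O(p^(2d)) for p > 3, while for
   p = 3 it is t + 3 t with t = 3^(2/(3^n 2)) sigma_(n+1). *)

Definition vexact (L : fieldType) (v : L -> rat) (x : L) (q : rat) : Prop :=
  x != 0 /\ v x = q.

Lemma qfracE (a b : nat) : qfrac a b = a%:R / b%:R.
Proof. by []. Qed.

Lemma qfrac_mul1 (a b : nat) : qfrac a b = a%:R * qfrac 1 b.
Proof. by rewrite !qfracE mul1r. Qed.

Section Valuation.
Variables (L : fieldType) (v : L -> rat).
Hypothesis vM : forall x y : L, x != 0 -> y != 0 -> v (x * y) = v x + v y.
Hypothesis vD : forall (x y : L) (r : rat), vge v x r -> vge v y r -> vge v (x + y) r.

Lemma vge_le x r s : vge v x r -> s <= r -> vge v x s.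
Proof. by move=> [->|xr] sr; [left | right; apply: le_trans xr]. Qed.

Lemma vexact_vge x q : vexact v x q -> vge v x q.
Proof. by case=> _ xq; right; rewrite xq. Qed.

Lemma v1 : v 1 = 0.
Proof. by have := vM (oner_neq0 L) (oner_neq0 L); rewrite mulr1 => h; lra. Qed.

Lemma vexact1 : vexact v 1 0.
Proof. by split; [exact: oner_neq0 | exact: v1]. Qed.

Lemma vexactN1 : vexact v (-1) 0.
Proof.
have N1 : (-1 : L) != 0 by rewrite oppr_eq0 oner_neq0.
by split=> //; have := vM N1 N1; rewrite mulrNN mulr1 v1 => h; lra.
Qed.

Lemma vexactM x y r s : vexact v x r -> vexact v y s -> vexact v (x * y) (r + s).
Proof. by case=> x0 <- [y0 <-]; split; [rewrite mulf_neq0 | rewrite vM]. Qed.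

Lemma vexactX x r k : vexact v x r -> vexact v (x ^+ k) (k%:R * r).
Proof.
move=> xr; elim: k => [|k IH]; first by rewrite expr0 mul0r; exact: vexact1.
by rewrite exprS mulrS mulrDl mul1r; exact: vexactM.
Qed.

Lemma vexactV x r : vexact v x r -> vexact v x^-1 (- r).
Proof.
case=> x0 xr; have xV0 : x^-1 != 0 by rewrite invr_eq0.
by split=> //; have := vM x0 xV0; rewrite mulfV // v1 xr => h; lra.
Qed.

Lemma vgeM x y r s : vge v x r -> vge v y s -> vge v (x * y) (r + s).
Proof.
have [-> _ _|x0] := eqVneq x 0; first by left; rewrite mul0r.
have [-> _ _|y0] := eqVneq y 0; first by left; rewrite mulr0.
case=> [/eqP|xr]; first by rewrite (negbTE x0).
case=> [/eqP|ys]; first by rewrite (negbTE y0).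
by right; rewrite vM // lerD.
Qed.

Lemma vgeX x r k : vge v x r -> vge v (x ^+ k) (k%:R * r).
Proof.
move=> xr; elim: k => [|k IH]; first by rewrite expr0 mul0r; exact: vexact_vge vexact1.
by rewrite exprS mulrS mulrDl mul1r; exact: vgeM.
Qed.

Lemma vgeN x r : vge v x r -> vge v (- x) r.
Proof.
by move=> xr; rewrite -mulN1r -[r]add0r; exact: vgeM (vexact_vge vexactN1) xr.
Qed.

Lemma vgeB x y r : vge v x r -> vge v y r -> vge v (x - y) r.
Proof. by move=> xr /vgeN; exact: vD. Qed.

Lemma vge_sum (I : eqType) (s : seq I) (P : pred I) (F : I -> L) r :
  (forall i, i \in s -> P i -> vge v (F i) r) -> vge v (\sum_(i <- s | P i) F i) r.
Proof.
move=> Fr; rewrite big_seq_cond; apply: (big_ind (fun x => vge v x r)).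
- by left.
- by move=> x y; apply: vD.
- by move=> i /andP[]; exact: Fr.
Qed.

Lemma vge_nat k : vge v k%:R 0.
Proof.
elim: k => [|k IH]; first by left.
by rewrite mulrS; apply: vD (vexact_vge vexact1) IH.
Qed.

Lemma vexact_unity_root x N : (0 < N)%N -> x ^+ N = 1 -> vexact v x 0.
Proof.
move=> N_gt0 xN; have x0 : x != 0.
  apply/eqP=> x0; move/eqP: xN; rewrite x0 expr0n eqn0Ngt N_gt0 eq_sym.
  by rewrite oner_eq0.
split=> //; have [_] := vexactX N (conj x0 (erefl (v x))).
rewrite xN v1 => /esym/eqP; rewrite mulf_eq0 pnatr_eq0 eqn0Ngt N_gt0 /=.
by move/eqP.
Qed.

Lemma vexact_1D T r : 0 < r -> vge v T r -> vexact v (1 + T) 0.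
Proof.
move=> r_gt0 Tr.
have not_both s : 0 < s -> vge v (1 + T) s -> vge v T s -> False.
  move=> s_gt0 T1s Ts; have := vgeB T1s Ts; rewrite addrK.
  by case=> [/eqP|]; [rewrite oner_eq0 | rewrite v1 => h; lra].
have T10 : 1 + T != 0 by apply/eqP=> T10; apply: (not_both r) => //; left.
have T1_ge0 : vge v (1 + T) 0.
  by apply: vD (vexact_vge vexact1) (vge_le Tr (ltW r_gt0)).
split=> //; case: T1_ge0 => [/eqP|]; first by rewrite (negbTE T10).
rewrite le_eqVlt => /orP[/eqP <- //|T1_gt0]; exfalso.
have [le_r|lt_r] := lerP (v (1 + T)) r.
- by apply: (not_both _ T1_gt0); [right | exact: vge_le Tr le_r].
- by apply: (not_both r r_gt0) => //; right; exact: ltW.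
Qed.

Lemma vge_expD1_sub X r N : 0 <= r -> vge v X r ->
  vge v ((1 + X) ^+ N - 1 - N%:R * X) (2 * r).
Proof.
move=> r_ge0 Xr; elim: N => [|N IH].
  by rewrite expr0 mul0r subrr subr0; left.
have -> : (1 + X) ^+ N.+1 - 1 - N.+1%:R * X
        = (1 + X) * ((1 + X) ^+ N - 1 - N%:R * X) + N%:R * X ^+ 2.
  by rewrite exprS mulrS; ring.
have X1 : vge v (1 + X) 0 by apply: vD (vexact_vge vexact1) (vge_le Xr r_ge0).
apply: vD; first by apply: (vge_le (vgeM X1 IH)); lra.
by apply: (vge_le (vgeM (vge_nat N) (vgeX 2 Xr))); lra.
Qed.

Lemma vge_invD1_sub T r : 0 < r -> vge v T r ->
  vge v ((1 + T)^-1 - (1 - T)) (2 * r).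
Proof.
move=> r_gt0 Tr; have T1 := vexact_1D r_gt0 Tr; have [T10 _] := T1.
have -> : (1 + T)^-1 - (1 - T) = T ^+ 2 * (1 + T)^-1 by field.
by apply: (vge_le (vgeM (vgeX 2 Tr) (vexact_vge (vexactV T1)))); lra.
Qed.


Lemma vge_expND1_sub X r N : 0 < r -> vge v X r ->
  vge v ((1 + X) ^- N - (1 - N%:R * X)) (2 * r).
Proof.
move=> r_gt0 Xr; have r_ge0 := ltW r_gt0.
have TN := vge_expD1_sub N r_ge0 Xr.
set T := (1 + X) ^+ N - 1 in TN.
have Tr : vge v T r.
  rewrite (_ : T = (T - N%:R * X) + N%:R * X); last by ring.
  apply: vD; first by apply: (vge_le TN); lra.
  by apply: (vge_le (vgeM (vge_nat N) Xr)); lra.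
have -> : (1 + X) ^- N = (1 + T)^-1 by rewrite /T [1 + (_ - 1)]addrC subrK.
rewrite (_ : _ - _ = ((1 + T)^-1 - (1 - T)) - (T - N%:R * X)); last by ring.
exact: vgeB (vge_invD1_sub r_gt0 Tr) TN.
Qed.

Section PAdic.
Variable p : nat.
Hypothesis hp3 : (3 <= p)%N.
Hypothesis v_coprime : forall k : nat, (0 < k)%N -> ~~ (p %| k)%N -> vexact v k%:R 0.

Lemma p_gt1 : (1 < p)%N. Proof. exact: ltnW. Qed.

Lemma vexact_small_nat k : (0 < k < p)%N -> vexact v k%:R 0.
Proof.
by case/andP=> k_gt0 k_lt; apply: (v_coprime k_gt0); rewrite (gtnNdvd k_gt0 k_lt).
Qed.

Lemma vexact_fact k : (k < p)%N -> vexact v k`!%:R 0.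
Proof.
elim: k => [|k IH] k_lt; first exact: vexact1.
rewrite factS natrM -[0]addr0; apply: vexactM (IH (ltnW k_lt)).
exact: vexact_small_nat.
Qed.

Lemma vge_harm k : (k < p)%N -> vge v (harm L k) 0.
Proof.
move=> k_lt; apply: vge_sum => i; rewrite mem_index_iota => /andP[i_gt0 i_le] _.
rewrite -oppr0; apply/vexact_vge/vexactV/vexact_small_nat.
by rewrite i_gt0 (leq_trans i_le).
Qed.

Lemma vge_invfact k : (k < p)%N -> vge v (k`!%:R)^-1 0.
Proof. by move=> k_lt; rewrite -oppr0; exact/vexact_vge/vexactV/vexact_fact. Qed.

Lemma vexact_half : vexact v 2^-1 0.
Proof. by rewrite -oppr0; apply/vexactV/vexact_small_nat; rewrite /= hp3. Qed.

Lemma vge_pow_invfact x r j k : 0 <= r -> vge v x r -> (j <= k < p)%N ->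
  vge v (x ^+ k / k`!%:R) (j%:R * r).
Proof.
move=> r_ge0 xr /andP[jk k_lt]; have jk' : j%:R <= k%:R :> rat by rewrite ler_nat.
apply: (vge_le (vgeM (vgeX k xr) (vge_invfact k_lt))); nra.
Qed.

Lemma vge_exp_tail3 x r : 0 <= r -> vge v x r ->
  vge v (\sum_(k < p) x ^+ k / k`!%:R - (1 + x + x ^+ 2 / 2)) (3 * r).
Proof.
move=> r_ge0 xr; rewrite -(big_mkord xpredT (fun k => x ^+ k / k`!%:R)).
rewrite big_ltn ?(ltnW p_gt1) // big_ltn ?p_gt1 // big_ltn //.
rewrite (_ : 2`!%:R = 2 :> L) // fact0 expr0 expr1 invr1 !mulr1.
set S := \sum_(3 <= k < p) _.
have -> : 1 + (x + (x ^+ 2 / 2 + S)) - (1 + x + x ^+ 2 / 2) = S by ring.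
apply: vge_sum => k; rewrite mem_index_iota => k_range _.
exact: vge_pow_invfact.
Qed.

Lemma vge_xexp_tail2 x r : 0 <= r -> vge v x r ->
  vge v (\sum_(k < p) x ^+ k.+1 / k`!%:R - x) (2 * r).
Proof.
move=> r_ge0 xr; rewrite -(big_mkord xpredT (fun k => x ^+ k.+1 / k`!%:R)).
rewrite big_ltn ?(ltnW p_gt1) // fact0 expr1 invr1 mulr1.
set S := \sum_(1 <= k < p) _.
have -> : x + S - x = S by ring.
apply: vge_sum => k; rewrite mem_index_iota => k_range _.
rewrite exprS -mulrA; apply: (vge_le (vgeM xr (vge_pow_invfact r_ge0 xr k_range))).
lra.
Qed.

Section Expansion.
Hypothesis vp : vexact v p%:R 1.
Variables (pp : rat -> L) (z : L) (sigma : nat -> L).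
Hypotheses (hpp : is_ppow v p pp) (hsigma : is_sigma v p pp sigma).
Hypothesis zN : z ^+ (2 * (p - 1)) = 1.

Lemma ppD x y : pp (x + y) = pp x * pp y. Proof. by case: hpp. Qed.

Lemma vexact_pp x : vexact v (pp x) x. Proof. by case: hpp => _ _; apply. Qed.

Lemma pp0 : pp 0 = 1.
Proof.
have [pp0_neq0 _] := vexact_pp 0.
by apply: (mulfI pp0_neq0); rewrite mulr1 -ppD addr0.
Qed.

Lemma ppN x : pp (- x) = (pp x)^-1.
Proof.
have [ppx_neq0 _] := vexact_pp x.
by apply: (mulfI ppx_neq0); rewrite -ppD subrr pp0 mulfV.
Qed.

Lemma pp_natmul x k : pp (k%:R * x) = pp x ^+ k.
Proof.
elim: k => [|k IH]; first by rewrite mul0r expr0 pp0.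
by rewrite mulrS mulrDl mul1r ppD IH exprS.
Qed.

Variable n : nat.
Hypothesis hn : (2 <= n)%N.

(* Every exponent below is an integer polynomial in P times e. *)
Let P : rat := p%:R.
Let e := qfrac 1 (p ^ n.+1 * (p - 1)).
Let d := qfrac 1 (p ^ n * (p - 1)).
Let N := (2 * (p - 1))%N.
Let a := (-1) ^+ n.+1 * z * pp d.
Let t := pp ((p - 1)%:R * d) * sigma n.+1.
Let c := if p == 3%N then pp (qfrac 2 (3 ^ n * 2)) else 0.

Lemma P_ge3 : 3 <= P. Proof. by rewrite /P (ler_nat _ 3). Qed.

Lemma natr_pB1 : (p - 1)%:R = P - 1.
Proof. by rewrite /P natrB // (ltnW p_gt1). Qed.

Lemma P_neq0 : P != 0. Proof. by apply: lt0r_neq0; have := P_ge3; lra. Qed.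

Lemma PB1_neq0 : P - 1 != 0. Proof. by apply: lt0r_neq0; have := P_ge3; lra. Qed.

Lemma pX_neq0 k : ((p ^ k)%:R : rat) != 0.
Proof. by rewrite pnatr_eq0 expn_eq0 negb_and -lt0n (ltnW p_gt1). Qed.

Lemma pX_pB1_gt0 k : (0 < p ^ k * (p - 1))%N.
Proof. by rewrite muln_gt0 expn_gt0 subn_gt0 (ltnW p_gt1) p_gt1. Qed.

Lemma e_gt0 : 0 < e.
Proof. by rewrite /e qfracE divr_gt0 // ltr0n pX_pB1_gt0. Qed.

Lemma d_le1 : d <= 1.
Proof. by rewrite /d qfracE mul1r invf_le1 ?ltr0n ?ler1n pX_pB1_gt0. Qed.

Lemma dE : d = P * e.
Proof.
rewrite /d /e !qfracE expnS !natrM natr_pB1; field.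
by rewrite P_neq0 PB1_neq0 pX_neq0.
Qed.

Lemma d_gt0 : 0 < d.
Proof. by rewrite dE mulr_gt0 ?e_gt0 // (lt_le_trans _ P_ge3). Qed.

Lemma sigma_expE : qfrac 1 (p ^ n.+1) = (P - 1) * e.
Proof.
rewrite /e !qfracE natrM natr_pB1; field.
by rewrite PB1_neq0 pX_neq0.
Qed.

Lemma quad_expE : qfrac 2 (p ^ (n.+1 - 2) * (p - 1)) = 2 * P ^+ 2 * e.
Proof.
have pn : (p ^ n.+1 = p * (p * p ^ n.-1))%N by rewrite -!expnS prednK // ltnW.
rewrite subSS subn1 /e !qfracE pn !natrM natr_pB1; field.
by rewrite P_neq0 PB1_neq0 pX_neq0.
Qed.

Lemma cubic_expE : qfrac (p - 2) (p ^ n.+1 * (p - 1)) = (P - 2) * e.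
Proof. by rewrite qfrac_mul1 natrB // ltnW. Qed.

Lemma pow_expE : qfrac 2 (p ^ n) = N%:R * d.
Proof.
rewrite /d /N !qfracE !natrM natr_pB1; field.
by rewrite PB1_neq0 pX_neq0.
Qed.

Lemma c_expE : p = 3%N -> qfrac 2 (3 ^ n * 2) = (p - 1)%:R * d.
Proof. by move=> p3; rewrite /d qfrac_mul1 p3. Qed.

Lemma vexact_sign k : vexact v ((-1) ^+ k) 0.
Proof. by rewrite -(mulr0 k%:R); exact: vexactX vexactN1. Qed.

Lemma vexact_z : vexact v z 0.
Proof. by apply: vexact_unity_root zN; rewrite muln_gt0 subn_gt0 p_gt1. Qed.

Lemma vexact_a : vexact v a d.
Proof.
rewrite -[d]add0r -[0]addr0; apply: vexactM (vexact_pp d).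
exact: vexactM (vexact_sign _) vexact_z.
Qed.

Lemma vexact_t : vexact v t ((P - 1) ^+ 2 * e).
Proof.
have [sigma_neq0 v_sigma] := (hsigma (ltn0Sn n)).2.
rewrite (_ : (P - 1) ^+ 2 * e = (p - 1)%:R * d - qfrac 1 (p ^ n.+1)).
  exact: vexactM (vexact_pp _) (conj sigma_neq0 v_sigma).
by rewrite sigma_expE dE natr_pB1; ring.
Qed.

Lemma vge_t : vge v t d.
Proof.
apply: (vge_le (vexact_vge vexact_t)).
by have := P_ge3; have := e_gt0; have := d_gt0; rewrite dE; nra.
Qed.

Lemma vge_Nt_sub_c : vge v (N%:R * t - c * sigma n.+1) (2 * d).
Proof.
rewrite /c; case: eqP => [p3|p_neq3].
  rewrite c_expE // -/t (_ : N%:R * t - t = p%:R * t); last first.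
    by rewrite /N p3 (_ : (2 * (3 - 1))%N = 4%N) //; ring.
  apply: (vge_le (vgeM (vexact_vge vp) vge_t)).
  have := d_le1; lra.
have p_ge4 : (4 <= p)%N by rewrite ltn_neqAle eq_sym hp3 andbT; apply/eqP.
have P_ge4 : 4 <= P by rewrite /P (ler_nat _ 4).
rewrite mul0r subr0; apply: (vge_le (vgeM (vge_nat _) (vexact_vge vexact_t))).
by have := e_gt0; have := d_gt0; rewrite dE; nra.
Qed.

Lemma exp_sum_aE :
  \sum_(k < p) (-1) ^+ (n.+1 * k) * (k`!%:R)^-1 * z ^+ k
     * pp (qfrac k (p ^ n * (p - 1)))
  = \sum_(k < p) a ^+ k / k`!%:R.
Proof.
by apply: eq_bigr => k _; rewrite qfrac_mul1 pp_natmul /a !exprMn exprM; ring.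
Qed.

Lemma exp_sum_shiftE :
  \sum_(k < p) (-1) ^+ (n.+1 * k.+1) * (k`!%:R)^-1 * z ^+ k.+1
     * pp (qfrac (k + p) (p ^ n * (p - 1))) * sigma n.+1
  = (\sum_(k < p) a ^+ k.+1 / k`!%:R) * t.
Proof.
rewrite mulr_suml; apply: eq_bigr => k _.
have -> : (k + p = k.+1 + (p - 1))%N by have := p_gt1; lia.
by rewrite qfrac_mul1 natrD mulrDl ppD pp_natmul /a /t !exprMn exprM; ring.
Qed.

Lemma zeta_sub1_approx zn : zeta_expansion v p pp z sigma zn n.+1 ->
  vge v (zn - 1 - (a + a ^+ 2 / 2 + a * t)) (3 * d).
Proof.
rewrite /zeta_expansion /= => -[err [err_ge ->]].
rewrite exp_sum_aE exp_sum_shiftE.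
set s1 := \sum_(k < p) a ^+ k / _.
set s2 := \sum_(k < p) a ^+ k.+1 / _.
set S3 := \sum_(1 <= k < p) _.
set S4 := 2^-1 * _ * _ * _.
set S5 := (-1) ^+ n.+1 / 2 * _ * _.
have -> : s1 + s2 * t - S3 + S4 + S5 + err - 1 - (a + a ^+ 2 / 2 + a * t)
    = (s1 - (1 + a + a ^+ 2 / 2)) + (s2 - a) * t - S3 + S4 + S5 + err by ring.
have P3 := P_ge3; have e0 := e_gt0; have d0 := ltW d_gt0.
have Pe := d_gt0; rewrite dE in Pe.
have a_d := vexact_vge vexact_a.
have vz k := vexact_vge (vexactX k vexact_z).
have vsign k := vexact_vge (vexact_sign k).
have vhalf := vexact_vge vexact_half.
have vpp x := vexact_vge (vexact_pp x).
have s2t_3d : vge v ((s2 - a) * t) (3 * d).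
  by apply: (vge_le (vgeM (vge_xexp_tail2 d0 a_d) vge_t)); lra.
have S3_3d : vge v S3 (3 * d).
  apply: vge_sum => k; rewrite mem_index_iota => /andP[_ k_lt] _.
  apply: (vge_le (vgeM (vgeM (vgeM (vgeM (vge_harm k_lt) (vge_invfact k_lt))
                                    (vsign _)) (vz _)) (vpp _))).
  have kp : 3 <= (k + p)%:R :> rat by rewrite ler_nat (leq_trans hp3) ?leq_addl.
  by rewrite qfrac_mul1 -/d; nra.
have S4_3d : vge v S4 (3 * d).
  apply: (vge_le (vgeM (vgeM (vgeM vhalf (vz 2)) (vpp _))
                       (vexact_vge (vexactX 2 (hsigma (ltn0Sn n)).2)))).
  by rewrite quad_expE sigma_expE dE; nra.
have S5_3d : vge v S5 (3 * d).
  apply: (vge_le (vgeM (vgeM (vgeM (vsign _) vhalf) (vz 3)) (vpp _))).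
  by rewrite quad_expE cubic_expE dE; nra.
have err_3d : vge v err (3 * d).
  by apply: (vge_le err_ge); rewrite quad_expE dE; nra.
apply: (vD _ err_3d); apply: (vD _ S5_3d); apply: (vD _ S4_3d); apply: (vgeB _ S3_3d).
exact: vD (vge_exp_tail3 d0 a_d) s2t_3d.
Qed.

Lemma a_expN : a ^+ N = pp (qfrac 2 (p ^ n)).
Proof.
have sign_N : (-1) ^+ N = 1 :> L by rewrite /N exprM sqrrN !expr1n.
by rewrite pow_expE pp_natmul /a !exprMn -exprM mulnC exprM sign_N expr1n /N zN !mul1r.
Qed.

Lemma zeta_sub1_inv_pow zn : zeta_expansion v p pp z sigma zn n.+1 ->
  exists err, vge v err (qfrac 2 (p ^ n * (p - 1))) /\
    (zn - 1) ^- N = pp (- qfrac 2 (p ^ n)) *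
      (1 - (-1) ^+ n * z * pp d - c * sigma n.+1 + err).
Proof.
move=> /zeta_sub1_approx approx.
have [a_neq0 _] := vexact_a; have a_d := vexact_vge vexact_a.
have two_neq0 : (2 : L) != 0 by rewrite -invr_eq0; case: vexact_half.
have d0 := d_gt0.
set R := zn - 1 - _ in approx.
set X := a / 2 + t + R / a.
have zn_aX : zn - 1 = a * (1 + X) by rewrite /X /R; field; rewrite a_neq0 two_neq0.
have X_approx : vge v (X - (a / 2 + t)) (2 * d).
  rewrite (_ : X - _ = R / a); last by rewrite /X; ring.
  by apply: (vge_le (vgeM approx (vexact_vge (vexactV vexact_a)))); lra.
have a_half : vge v (a / 2) d.
  by apply: (vge_le (vgeM a_d (vexact_vge vexact_half))); lra.
have X_d : vge v X d.
  rewrite (_ : X = (X - (a / 2 + t)) + (a / 2 + t)); last by ring.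
  by apply: vD (vD a_half vge_t); apply: (vge_le X_approx); lra.
exists ((1 + X) ^- N - 1 - a + c * sigma n.+1); split.
  rewrite qfrac_mul1 -/d; set Y := (1 + X) ^- N.
  rewrite (_ : _ - 1 - a + _ = (Y - (1 - N%:R * X))
      - N%:R * (X - (a / 2 + t)) - p%:R * a - (N%:R * t - c * sigma n.+1)); last first.
    by rewrite /N natrM natrB ?(ltnW p_gt1) //; field.
  apply: vgeB vge_Nt_sub_c; apply: vgeB.
    apply: vgeB; first exact: vge_expND1_sub d0 X_d.
    by apply: (vge_le (vgeM (vge_nat N) X_approx)); lra.
  by apply: (vge_le (vgeM (vexact_vge vp) a_d)); have := d_le1; lra.
by rewrite zn_aX exprMn a_expN invfM -ppN /a exprS; ring.
Qed.

End Expansion.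
End PAdic.
End Valuation.

Theorem proposition2p3
  (p : nat) (hp : prime p) (hp3 : (3 <= p)%N)
  (L : fieldType) (v : L -> rat) (pp : rat -> L)
  (z : L) (sigma : nat -> L) (zeta : nat -> L)
  (hv : is_p_valuation v p)
  (hpp : is_ppow v p pp)
  (hsigma : is_sigma v p pp sigma)
  (hz : (2 * (p - 1)).-primitive_root z)
  (hzeta_prim : forall n : nat, (1 <= n)%N -> (p ^ n).-primitive_root (zeta n))
  (hzeta_comp : forall n : nat, (1 <= n)%N -> zeta n.+1 ^+ p = zeta n)
  (hzeta_exp : forall n : nat, (2 <= n)%N ->
      zeta_expansion v p pp z sigma (zeta n) n)
  (n : nat) (hn : (2 <= n)%N) :
  exists e : L, vge v e (qfrac 2 (p ^ n * (p - 1))) /\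
    (zeta n.+1 - 1) ^- (2 * (p - 1)) =
      pp (- qfrac 2 (p ^ n)) *
      (1 - (-1) ^+ n * z * pp (qfrac 1 (p ^ n * (p - 1)))
         - (if p == 3%N then pp (qfrac 2 (3 ^ n * 2)) else 0) * sigma n.+1
         + e).
Proof.
have [vM vD vp v_coprime] := hv.
apply: (zeta_sub1_inv_pow vM vD hp3 v_coprime vp hpp hsigma (prim_expr_order hz) hn).
exact: hzeta_exp (leqW hn).
Qed.
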